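(* Let $(H_1,+_1,\circ_1)$ and $(H_2,+_2,\circ_2)$ be commutative multiplicative hyperrings with identity, and let $P_1$ and $P_2$ be nonzero proper strong $\mathcal{C}$-hyperideals of $H_1$ and $H_2$, respectively. Then $P_1$ is an sdf-absorbing hyperideal of $H_1$ if and only if $P_1\times H_2$ is an sdf-absorbing hyperideal of $H_1\times H_2$.
   Context: A commutative multiplicative hyperring $(H,+,\circ)$ consists of an abelian group $(H,+)$ and an associative, commutative hyperoperation $\circ: H\times H\to P^*(H)$ with $x\circ(y+z)\subseteq x\circ y+x\circ z$ and $x\circ(-y)=-(x\circ y)=(-x)\circ y$. For subsets $A,B$, $A\circ B=\bigcup_{a\in A,b\in B}a\circ b$, $A\pm B=\{a\pm b\}$; $x^2=x\circ x$. Identity: $x\in x\circ 1$ for all $x$. $H_1\times H_2$ is the hyperring with $(x_1,x_2)+(y_1,y_2)=(x_1+_1y_1,x_2+_2y_2)$ and $(x_1,x_2)\circ(y_1,y_2)=\{(a,b): a\in x_1\circ_1y_1, b\in x_2\circ_2y_2\}$. A hyperideal is a nonempty $P$ with $x-y\in P$ and $r\circ x\subseteq P$ for $x,y\in P$, $r\in H$. Let $\mathcal{C}=\{c_1\circ\cdots\circ c_n: c_i\in H\}$ and $\mathfrak{C}=\{\sum_{i=1}^m C_i: C_i\in\mathcal{C}\}$; $P$ is a strong $\mathcal{C}$-hyperideal if for every $D\in\mathfrak{C}$, $D\cap P\neq\varnothing$ implies $D\subseteq P$. A proper hyperideal $P$ is sdf-absorbing if whenever $x,y$ are nonzero and $x^2-y^2\subseteq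 P$, then $x-y\in P$ or $x+y\in P$. *)

From HB Require Import structures.
From mathcomp Require Import all_boot all_algebra.
Set Implicit Arguments. Unset Strict Implicit. Unset Printing Implicit Defensive.
Import GRing.Theory.
Local Open Scope ring_scope.

(* A hyperoperation on H is represented by its membership relation:
   hm x y z  <->  z \in x o y. *)
Definition hyperop (H : Type) := H -> H -> H -> Prop.

Section Hyper.
Variable H : zmodType.
Variable hm : hyperop H.

Definition comm_mult_hyperring : Prop :=
  [/\ (forall x y, exists z, hm x y z),
      (forall x y z w, (exists a, hm x y a /\ hm a z w) <->
                       (exists b, hm y z b /\ hm x b w)),           (* associativity *)
      (forall x y z, hm x y z <-> hm y x z),
      (forall x y z w, hm x (y + z) w ->
         exists a b, [/\ hm x y a, hm x z b & w = a + b])           (* x o (y+z) <= x o y + x o z *)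
    & (forall x y w, (hm x (- y) w <-> hm x y (- w)) /\
                     (hm (- x) y w <-> hm x y (- w)))].             (* x o (-y) = -(x o y) = (-x) o y *)

Definition has_identity : Prop := exists e : H, forall x, hm x e x.

Definition hyperideal (P : H -> Prop) : Prop :=
  [/\ exists x, P x,
      (forall x y, P x -> P y -> P (x - y))
    & (forall r x z, P x -> hm r x z -> P z)].

Definition proper_set (P : H -> Prop) : Prop := exists x, ~ P x.
Definition nonzero_set (P : H -> Prop) : Prop := exists x, P x /\ x <> 0.

(* c o c1 o ... o cn as a set (n >= 0) *)
Fixpoint hprod (c : H) (cs : seq H) : H -> Prop :=
  match cs with
  | [::] => fun z => z = c
  | d :: ds => fun z => exists a, hprod d ds a /\ hm c a z
  end.

(* finite (nonempty) sums of elements of the family C *)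
Fixpoint hsum (t : H * seq H) (ts : seq (H * seq H)) : H -> Prop :=
  match ts with
  | [::] => hprod t.1 t.2
  | u :: us => fun z => exists a b, [/\ hprod t.1 t.2 a, hsum u us b & z = a + b]
  end.

Definition strong_C_hyperideal (P : H -> Prop) : Prop :=
  hyperideal P /\
  forall t ts, (exists z, hsum t ts z /\ P z) -> forall z, hsum t ts z -> P z.

(* x^2 - y^2 as a set *)
Definition sq_diff (x y : H) : H -> Prop :=
  fun z => exists a b, [/\ hm x x a, hm y y b & z = a - b].

Definition sdf_absorbing (P : H -> Prop) : Prop :=
  [/\ hyperideal P, proper_set P &
      forall x y, x <> 0 -> y <> 0 -> (forall z, sq_diff x y z -> P z) ->
        P (x - y) \/ P (x + y)].
End Hyper.

Definition prod_hyperop (H1 H2 : Type) (m1 : hyperop H1) (m2 : hyperop H2) :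
  hyperop (H1 * H2) :=
  fun x y z => m1 x.1 y.1 z.1 /\ m2 x.2 y.2 z.2.

Definition prod_set (H1 H2 : Type) (P : H1 -> Prop) : H1 * H2 -> Prop :=
  fun p => P p.1.

From mathcomp Require Import all_boot all_algebra.
Set Implicit Arguments. Unset Strict Implicit.
Import GRing.Theory.
Local Open Scope ring_scope.

(* The key fact is that an sdf-absorbing hyperideal P containing some p <> 0
   contains every u with u o u <= P: the sdf property applied to u and p puts
   u - p or u + p in P.  This makes the nonzero hypotheses of the sdf
   condition superfluous, which is exactly what P1 x H2 needs, since a nonzero
   pair may have a zero first coordinate.  Conversely, P1 is tested on the
   pairs (x, 0) and (y, 0). *)

Section HyperidealTheory.
Variables (H : zmodType) (hm : hyperop H) (P : H -> Prop).
Hypothesis idealP : hyperideal hm P.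

Lemma hyperideal0 : P 0.
Proof. by case: idealP => [[x Px] subP _]; rewrite -(subrr x); apply: subP. Qed.

Lemma hyperidealN x : P (- x) <-> P x.
Proof.
case: idealP => [_ subP _].
have oppP y : P y -> P (- y) by rewrite -sub0r; apply: subP hyperideal0.
by split=> [/oppP|/oppP //]; rewrite opprK.
Qed.

Lemma hyperidealBr x y : P x -> (P (y - x) <-> P y).
Proof.
case: idealP => [_ subP _] Px.
split=> [Pyx|Py]; last exact: subP.
rewrite -(subrK x y) -[x in _ + x]opprK.
by apply: subP => //; apply/hyperidealN.
Qed.

Lemma hyperidealDr x y : P x -> (P (y + x) <-> P y).
Proof.
by move=> Px; rewrite -[x]opprK; apply: hyperidealBr; apply/hyperidealN.
Qed.

Lemma hyperideal_hm0 r z : hm r 0 z -> P z.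
Proof. by case: idealP => [_ _ absP]; apply: absP hyperideal0. Qed.

End HyperidealTheory.

Section SdfAbsorbing.
Variables (H : zmodType) (hm : hyperop H) (P : H -> Prop).
Hypothesis hm_nonempty : forall x y, exists z, hm x y z.
Hypothesis sdfP : sdf_absorbing hm P.
Hypothesis nzP : nonzero_set P.

Let idealP : hyperideal hm P. Proof. by case: sdfP. Qed.

Lemma sdf_absorbing_sqr_mem u : (forall a, hm u u a -> P a) -> P u.
Proof.
move=> sqrP; have [-> | u_neq0] := eqVneq u 0; first exact: hyperideal0 idealP.
have [p [Pp p_neq0]] := nzP; case: sdfP => _ _ sdf.
have [Pup | Pup] : P (u - p) \/ P (u + p).
  apply: sdf => //; first exact/eqP.
  move=> _ [a [b [uua ppb ->]]]; apply/(hyperidealBr idealP); last exact: sqrP.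
  by case: idealP => [_ _ absP]; apply: absP ppb.
- by apply/(hyperidealBr idealP _ Pp).
- by apply/(hyperidealDr idealP _ Pp).
Qed.

Lemma sdf_absorbing_sq_diff x y :
  (forall z, sq_diff hm x y z -> P z) -> P (x - y) \/ P (x + y).
Proof.
move=> sqP; have [c c00] := hm_nonempty 0 0.
have P00 : P c := hyperideal_hm0 idealP c00.
have [x0 | x_neq0] := eqVneq x 0.
  left; rewrite x0 sub0r.
  apply/(hyperidealN idealP)/sdf_absorbing_sqr_mem => b yyb.
  apply/(hyperidealN idealP)/(hyperidealDr idealP _ P00); rewrite addrC.
  by apply: sqP; exists c, b; rewrite x0.
have [y0 | y_neq0] := eqVneq y 0.
  left; rewrite y0 subr0; apply: sdf_absorbing_sqr_mem => a xxa.
  by apply/(hyperidealBr idealP _ P00); apply: sqP; exists a, c; rewrite y0.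
by case: sdfP => _ _ sdf; apply: sdf => //; apply/eqP.
Qed.

End SdfAbsorbing.

Section ProdSet.
Variables (H1 H2 : zmodType) (m1 : hyperop H1) (m2 : hyperop H2).
Variable P1 : H1 -> Prop.

Local Notation m := (prod_hyperop m1 m2).
Local Notation P := (@prod_set H1 H2 P1).

Lemma sq_diff_prod x y z :
  sq_diff m x y z <-> sq_diff m1 x.1 y.1 z.1 /\ sq_diff m2 x.2 y.2 z.2.
Proof.
split=> [[[a1 a2] [[b1 b2] [[xxa1 xxa2] [yyb1 yyb2] ->]]] | ].
  by split; [exists a1, b1 | exists a2, b2].
move=> [[a1 [b1 [xxa1 yyb1 z1E]]] [a2 [b2 [xxa2 yyb2 z2E]]]].
by exists (a1, a2), (b1, b2); split; rewrite // [z]surjective_pairing z1E z2E.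
Qed.

Lemma prod_set_hyperideal : hyperideal m1 P1 -> hyperideal m P.
Proof.
case=> [[x Px] subP absP]; split; first by exists (x, 0).
  by move=> u v; apply: subP.
by move=> r u z Pu [ruz _]; apply: absP ruz.
Qed.

Lemma hyperideal_of_prod_set :
  (exists w, m2 0 0 w) -> hyperideal m P -> hyperideal m1 P1.
Proof.
move=> [w m200w] [[[x x2] Px] subP absP]; split; first by exists x.
  by move=> u v Pu Pv; apply: (subP (u, 0) (v, 0)).
by move=> r u z Pu ruz; apply: (absP (r, 0) (u, 0) (z, w)).
Qed.

Lemma prod_set_sdf_absorbing :
  (forall x y, exists z, m1 x y z) -> (forall x y, exists z, m2 x y z) ->
  nonzero_set P1 -> sdf_absorbing m1 P1 -> sdf_absorbing m P.
Proof.
move=> m1_nonempty m2_nonempty nzP1 sdfP1.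
have [idealP1 [q nPq] _] := sdfP1.
split; [exact: prod_set_hyperideal | by exists (q, 0) |].
move=> x y _ _ sqP; apply: (sdf_absorbing_sq_diff m1_nonempty sdfP1 nzP1).
move=> z1 sq1z1; have [a2 xxa2] := m2_nonempty x.2 x.2.
have [b2 yyb2] := m2_nonempty y.2 y.2.
by apply: (sqP (z1, a2 - b2)); apply/sq_diff_prod; split => //; exists a2, b2.
Qed.

Lemma sdf_absorbing_of_prod_set :
  (exists w, m2 0 0 w) -> sdf_absorbing m P -> sdf_absorbing m1 P1.
Proof.
move=> m200 [idealP [[q q2] nPq] sdf].
split; [exact: hyperideal_of_prod_set | by exists q |].
move=> x y x_neq0 y_neq0 sqP1.
apply: (sdf (x, 0) (y, 0)); [by case | by case |].
by move=> z /sq_diff_prod [sq1z _]; apply: sqP1.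
Qed.

End ProdSet.

Theorem mainTheorem15 (H1 H2 : zmodType) (m1 : hyperop H1) (m2 : hyperop H2)
  (P1 : H1 -> Prop) (P2 : H2 -> Prop) :
  comm_mult_hyperring m1 -> has_identity m1 ->
  comm_mult_hyperring m2 -> has_identity m2 ->
  strong_C_hyperideal m1 P1 -> nonzero_set P1 -> proper_set P1 ->
  strong_C_hyperideal m2 P2 -> nonzero_set P2 -> proper_set P2 ->
  (sdf_absorbing m1 P1 <->
   sdf_absorbing (prod_hyperop m1 m2) (@prod_set H1 H2 P1)).
Proof.
move=> [m1_nonempty _ _ _ _] _ [m2_nonempty _ _ _ _] _ _ nzP1 _ _ _ _.
split; first exact: prod_set_sdf_absorbing.
exact: sdf_absorbing_of_prod_set.
Qed.
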